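(* Let $d\ge 3$, $n\ge d+1$ and $2\le k\le d+1$. Then $\chi^{\mathsf{s}}_{d,k}(n)\ge \chi^{\mathsf{s}}_{d,d+1}(n)\ge \lfloor\sqrt{n-d+3}\rfloor+d-3$.
   Context: A $k$-uniform hypergraph $H=(V,E)$ consists of a finite set $V$ and $E\subseteq\binom{V}{k}$. A (linear) embedding of $H$ into $\mathbb{R}^d$ is a map $\phi:V(H)\to\mathbb{R}^d$ with $\dim\operatorname{aff}\phi(e)=k-1$ for every edge $e$ and $\operatorname{conv}\phi(e_1)\cap\operatorname{conv}\phi(e_2)=\operatorname{conv}\phi(e_1\cap e_2)$ for all edges $e_1,e_2$. $\mathcal{E}_{d,k}$ is the set of $k$-uniform hypergraphs admitting such an embedding into $\mathbb{R}^d$. A strong $c$-coloring of $H$ is a map $\kappa:V(H)\to\{1,\dots,c\}$ with $|\kappa(e)|=k$ for every edge $e$; $\chi^{\mathsf{s}}(H)$ is the least such $c$. $\chi^{\mathsf{s}}_{d,k}(n)=\max\{\chi^{\mathsf{s}}(H): H\in\mathcal{E}_{d,k},\ |V(H)|=n\}$. *)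

From Stdlib Require Import Reals ClassicalEpsilon.
From mathcomp Require Import all_boot.

Set Implicit Arguments.
Unset Strict Implicit.
Unset Printing Implicit Defensive.

Record hypergraph (k : nat) := Hypergraph {
  hv : finType;
  hE : {set {set hv}};
  huni : forall e, e \in hE -> #|e| = k
}.

Section Geometry.
Variables (V : finType) (d : nat).
Implicit Types (phi : V -> 'I_d -> R) (S T : {set V}).

Definition rsum (S : {set V}) (f : V -> R) : R := \big[Rplus/R0]_(v in S) f v.

Definition in_conv phi S (x : 'I_d -> R) : Prop :=
  exists w : V -> R,
    (forall v, Rle R0 (w v)) /\ (forall v, v \notin S -> w v = R0) /\
    rsum S w = R1 /\ (forall i, x i = rsum S (fun v => Rmult (w v) (phi v i))).

Definition aff_indep phi T : Prop :=
  forall l : V -> R, rsum T l = R0 ->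
    (forall i, rsum T (fun v => Rmult (l v) (phi v i)) = R0) ->
    forall v, v \in T -> l v = R0.

Definition aff_dim_eq phi S (m : nat) : Prop :=
  (exists T, T \subset S /\ aff_indep phi T /\ #|T| = m.+1) /\
  (forall T, T \subset S -> aff_indep phi T -> #|T| <= m.+1).

End Geometry.

Definition is_embedding (d k : nat) (H : hypergraph k)
    (phi : hv H -> 'I_d -> R) : Prop :=
  (forall e, e \in hE H -> aff_dim_eq phi e (k - 1)) /\
  (forall e1 e2, e1 \in hE H -> e2 \in hE H ->
     forall x, (in_conv phi e1 x /\ in_conv phi e2 x) <->
               in_conv phi (e1 :&: e2) x).

Definition embeddable (d k : nat) (H : hypergraph k) : Prop :=
  exists phi : hv H -> 'I_d -> R, @is_embedding d k H phi.

Definition strong_coloring k (H : hypergraph k) c (kappa : hv H -> 'I_c) : bool :=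
  [forall e in hE H, #|kappa @: e| == k].

Definition s_colorable k (H : hypergraph k) (c : nat) : bool :=
  [exists kappa : {ffun hv H -> 'I_c}, strong_coloring kappa].

Lemma s_colorable_card k (H : hypergraph k) : s_colorable H #|hv H|.
Proof.
apply/existsP; exists [ffun v => enum_rank v].
apply/forall_inP => e He.
rewrite card_in_imset ?huni //.
by move=> x y _ _; rewrite !ffunE; apply: enum_rank_inj.
Qed.

Lemma s_colorable_ex k (H : hypergraph k) : exists c, s_colorable H c.
Proof. by exists #|hv H|; apply: s_colorable_card. Qed.

Definition chi_s k (H : hypergraph k) : nat := ex_minn (s_colorable_ex H).

Definition pbool (P : Prop) : bool :=
  if excluded_middle_informative P then true else false.

(* chi^s_{d,k}(n) = max { chi_s H : H ∈ E_{d,k}, |V(H)| = n }.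
   Since chi_s H <= |V(H)| = n, the max may be taken over m <= n. *)
Definition chi_s_dk (d k n : nat) : nat :=
  \max_(m < n.+1 | pbool (exists H : hypergraph k,
        #|hv H| = n /\ embeddable d H /\ chi_s H = m)) m.

From Stdlib Require Import Reals Lra Lia ClassicalEpsilon.
From mathcomp Require Import all_boot Rstruct zify.

(* The k-skeleton of an embedded (d+1)-uniform hypergraph
   (all k-subsets of its edges) is embedded by the same map: edges are
   affinely independent simplices, so faces stay simplices, and uniqueness of
   barycentric coordinates turns the intersection property of the edges into
   that of their faces.  A strong coloring of the skeleton (k >= 2) is a
   strong coloring of the original hypergraph.

   Put d = d'+3 and m = isqrt(n-d+3).  Place m clique
   vertices at the integers 0..m-1 of the moment curve t |-> (t,t^2,t^3) in the
   first three coordinates, one auxiliary vertex per ordered pair of clique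
   vertices just to the right of its first entry, and d' apices at the unit
   vectors e_4..e_d; pad with isolated vertices up to n.  For each pair a < b
   the edge {a, b, aux(a,b), aux(b,a)} + apices has d+1 affinely independent
   points.  Any two such edges are separated by a hyperplane through the
   apices whose restriction to the moment curve is a cubic with suitably
   placed roots, which gives the intersection property.  The clique and apex
   vertices pairwise share an edge, so at least m + d' colors are needed. *)

Set Implicit Arguments.
Unset Strict Implicit.
Unset Printing Implicit Defensive.

Section ConvexHulls.
Variables (V : finType) (d : nat) (phi : V -> 'I_d -> R).
Implicit Types (S T : {set V}) (f g w : V -> R) (x : 'I_d -> R).
Local Open Scope R_scope.

Definition conv_weights S x w : Prop :=
  (forall v, 0 <= w v) /\ (forall v, v \notin S -> w v = 0) /\
  rsum S w = 1 /\ (forall i, x i = rsum S (fun v => w v * phi v i)).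

Definition aff_fun (c0 : R) (c : 'I_d -> R) x : R :=
  c0 + \big[Rplus/R0]_(i < d) (c i * x i).

Lemma rsumB S f g : rsum S (fun v => f v - g v) = rsum S f - rsum S g.
Proof.
rewrite /rsum /Rminus big_split /=; congr (_ + _).
by rewrite (big_morph Ropp (id1 := R0) (op1 := Rplus)) //; [move=> *; ring | rewrite Ropp_0].
Qed.

Lemma rsum_aff_fun S w c0 c :
  rsum S (fun v => w v * aff_fun c0 c (phi v)) =
  c0 * rsum S w + \big[Rplus/R0]_(i < d) (c i * rsum S (fun v => w v * phi v i)).
Proof.
rewrite /rsum /aff_fun.
under eq_bigr do rewrite Rmult_plus_distr_l.
rewrite big_split /=; congr (_ + _).
  by rewrite big_distrr /=; apply: eq_bigr => v _; ring.
under eq_bigr do rewrite big_distrr /=.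
rewrite exchange_big /=; apply: eq_bigr => i _.
by rewrite big_distrr /=; apply: eq_bigr => v _; ring.
Qed.

Lemma rsum_nonpos S f : (forall v, v \in S -> f v <= 0) -> rsum S f <= 0.
Proof.
by move=> H; rewrite /rsum; apply: (big_ind (fun r => r <= 0)) => //; [lra | move=> *; lra].
Qed.

Lemma rsum_nonneg S f : (forall v, v \in S -> 0 <= f v) -> 0 <= rsum S f.
Proof.
by move=> H; rewrite /rsum; apply: (big_ind (fun r => 0 <= r)) => //; [lra | move=> *; lra].
Qed.

Lemma rsum_nonpos_eq0 S f : (forall v, v \in S -> f v <= 0) -> rsum S f = 0 ->
  forall v, v \in S -> f v = 0.
Proof.
move=> H Hs v Hv; move: Hs; rewrite /rsum (bigD1 v) //=.
have : \big[Rplus/R0]_(u in S | u != v) f u <= 0.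
  by apply: (big_ind (fun r => r <= 0)) => //; [lra | move=> *; lra | move=> u /andP[/H]].
by have := H v Hv; lra.
Qed.

Lemma rsum_subset S S' f : S' \subset S ->
  (forall v, v \in S -> v \notin S' -> f v = 0) -> rsum S f = rsum S' f.
Proof.
move=> sub H; rewrite /rsum (big_setID S') /= (setIidPr sub).
by rewrite [X in _ + X]big1 ?Rplus_0_r // => v; rewrite inE => /andP[h1 h2]; apply: H.
Qed.

Lemma conv_weights_grow S S' x w : S \subset S' -> conv_weights S x w -> conv_weights S' x w.
Proof.
move=> sub [w_ge0 [w_out [w_sum w_pt]]].
have w_in : forall v, v \in S' -> v \notin S -> w v = 0 by move=> v _; apply: w_out.
split=> //; split; first by move=> v h; apply: w_out; apply: contra h; apply: (subsetP sub).
split; first by rewrite (rsum_subset sub).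
by move=> i; rewrite w_pt (rsum_subset sub) // => v hv h; rewrite w_in ?Rmult_0_l.
Qed.

Lemma conv_weights_shrink S S' x w : S' \subset S -> conv_weights S x w ->
  (forall v, v \in S -> v \notin S' -> w v = 0) -> conv_weights S' x w.
Proof.
move=> sub [w_ge0 [w_out [w_sum w_pt]]] w_in.
split=> //; split.
  move=> v h; case Sv: (v \in S); [exact: w_in | by apply: w_out; rewrite Sv].
split; first by rewrite -(rsum_subset sub).
by move=> i; rewrite w_pt (rsum_subset sub) // => v hv h; rewrite w_in ?Rmult_0_l.
Qed.

Lemma in_conv_mono S S' x : S \subset S' -> in_conv phi S x -> in_conv phi S' x.
Proof. by move=> sub [w hw]; exists w; apply: conv_weights_grow hw. Qed.

Lemma in_conv_setI S T x :
  in_conv phi (S :&: T) x -> in_conv phi S x /\ in_conv phi T x.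
Proof. by move=> h; split; apply: in_conv_mono h; [exact: subsetIl | exact: subsetIr]. Qed.

Lemma conv_weights_aff S x w c0 c : conv_weights S x w ->
  aff_fun c0 c x = rsum S (fun v => w v * aff_fun c0 c (phi v)).
Proof.
move=> [_ [_ [w_sum w_pt]]].
rewrite rsum_aff_fun w_sum Rmult_1_r /aff_fun; congr (_ + _).
by apply: eq_bigr => i _; rewrite w_pt.
Qed.

Lemma separated_conv_setI S T c0 c :
  (forall v, v \in S -> aff_fun c0 c (phi v) <= 0 /\ (aff_fun c0 c (phi v) = 0 -> v \in T)) ->
  (forall v, v \in T -> 0 <= aff_fun c0 c (phi v) /\ (aff_fun c0 c (phi v) = 0 -> v \in S)) ->
  forall x, (in_conv phi S x /\ in_conv phi T x) <-> in_conv phi (S :&: T) x.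
Proof.
move=> fS fT x; split; last exact: in_conv_setI.
move=> [[w1 hw1] [w2 hw2]].
have terms_nonpos : forall v, v \in S -> w1 v * aff_fun c0 c (phi v) <= 0.
  by move=> v /fS[h _]; have := proj1 hw1 v; nra.
have fx_nonpos := rsum_nonpos terms_nonpos.
have fx_nonneg : 0 <= rsum T (fun v => w2 v * aff_fun c0 c (phi v)).
  by apply: rsum_nonneg => v /fT[h _]; have := proj1 hw2 v; nra.
rewrite -(conv_weights_aff c0 c hw1) in fx_nonpos.
rewrite -(conv_weights_aff c0 c hw2) in fx_nonneg.
have fx_eq0 : rsum S (fun v => w1 v * aff_fun c0 c (phi v)) = 0.
  by rewrite -(conv_weights_aff c0 c hw1); lra.
exists w1; apply: conv_weights_shrink hw1 _ => [|v vS]; first exact: subsetIl.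
rewrite inE vS /= => vNT.
have /Rmult_integral[//|f0] := rsum_nonpos_eq0 terms_nonpos fx_eq0 vS.
by have [_ /(_ f0)] := fS v vS; rewrite (negbTE vNT).
Qed.

End ConvexHulls.

Section AffineIndependence.
Variables (V : finType) (d : nat) (phi : V -> 'I_d -> R).
Local Open Scope R_scope.

Lemma aff_indep_of_dual (T : {set V}) :
  (forall v0, v0 \in T -> exists c0 c, aff_fun c0 c (phi v0) <> 0 /\
     forall v, v \in T -> v != v0 -> aff_fun c0 c (phi v) = 0) -> aff_indep phi T.
Proof.
move=> H l Hl Hi v0 Hv0.
have [c0 [c [Hne Hz]]] := H v0 Hv0.
have := rsum_aff_fun phi T l c0 c; rewrite Hl big1 => [|i _]; last by rewrite Hi Rmult_0_r.
rewrite Rmult_0_r Rplus_0_r /rsum (bigD1 v0) //= big1 => [|v /andP[vT v_v0]].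
  by rewrite Rplus_0_r => /Rmult_integral[].
by rewrite Hz // Rmult_0_r.
Qed.

Lemma aff_indep_subset (T T' : {set V}) :
  T' \subset T -> aff_indep phi T -> aff_indep phi T'.
Proof.
move=> sub H l Hl Hi v Hv.
pose l' u := if u \in T' then l u else R0.
have l'_out : forall u, u \in T -> u \notin T' -> l' u = 0 by move=> u _ /negbTE; rewrite /l' => ->.
have l'_sum : forall g, rsum T (fun u => l' u * g u) = rsum T' (fun u => l u * g u).
  move=> g; rewrite (rsum_subset sub) => [|u uT /(l'_out _ uT) ->]; last by rewrite Rmult_0_l.
  by apply: eq_bigr => u uT'; rewrite /l' uT'.
have := H l' _ _ v (subsetP sub v Hv); rewrite /l' Hv; apply.
  by rewrite (rsum_subset sub l'_out); rewrite -Hl; apply: eq_bigr => u uT'; rewrite /l' uT'.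
by move=> i; rewrite l'_sum.
Qed.

Lemma conv_weights_unique (e : {set V}) x w1 w2 : aff_indep phi e ->
  conv_weights phi e x w1 -> conv_weights phi e x w2 -> forall v, v \in e -> w1 v = w2 v.
Proof.
move=> H [_ [_ [s1 p1]]] [_ [_ [s2 p2]]] v hv.
have diff_sum : rsum e (fun u => w1 u - w2 u) = 0 by rewrite rsumB s1 s2; lra.
have diff_pt : forall i, rsum e (fun u => (w1 u - w2 u) * phi u i) = 0.
  move=> i; rewrite -[RHS](Rminus_diag (x i)) {1}p1 p2 -rsumB.
  by apply: eq_bigr => u _; ring.
by have := H _ diff_sum diff_pt v hv; lra.
Qed.

Lemma aff_dim_full_indep (e : {set V}) K : #|e| = K -> (0 < K)%N ->
  aff_dim_eq phi e (K - 1) -> aff_indep phi e.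
Proof.
move=> hc hK [[T [sub [ind cT]]] _].
have -> // : e = T.
by apply/eqP; rewrite eq_sym eqEcard sub hc cT subn1 prednK ?leqnn.
Qed.

(* Faces e1', e2' of affinely independent edges e1, e2 whose hulls meet only in
   conv(e1 :&: e2) also meet only in conv(e1' :&: e2'): by uniqueness of
   barycentric coordinates, the weights of a common point agree on e1 and e2. *)
Lemma face_conv_setI (e1 e2 e1' e2' : {set V}) x :
  aff_indep phi e1 -> aff_indep phi e2 -> e1' \subset e1 -> e2' \subset e2 ->
  (in_conv phi e1 x /\ in_conv phi e2 x -> in_conv phi (e1 :&: e2) x) ->
  in_conv phi e1' x -> in_conv phi e2' x -> in_conv phi (e1' :&: e2') x.
Proof.
move=> ind1 ind2 sub1 sub2 inter [w1 hw1] [w2 hw2].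
have hw1' := conv_weights_grow sub1 hw1; have hw2' := conv_weights_grow sub2 hw2.
have [w3 hw3] := inter (conj (ex_intro _ w1 hw1') (ex_intro _ w2 hw2')).
have w13 := conv_weights_unique ind1 hw1' (conv_weights_grow (subsetIl _ _) hw3).
have w23 := conv_weights_unique ind2 hw2' (conv_weights_grow (subsetIr _ _) hw3).
have [_ [w1_out _]] := hw1; have [_ [w2_out _]] := hw2; have [_ [w3_out _]] := hw3.
exists w1; apply: conv_weights_shrink hw1 _ => [|v v1']; first exact: subsetIl.
rewrite inE v1' /= => vN2'; have v1 := subsetP sub1 v v1'; rewrite w13 //.
case v2: (v \in e2); first by rewrite -w23 // w2_out.
by rewrite w3_out // inE v2 andbF.
Qed.

End AffineIndependence.

Lemma pboolP (P : Prop) : pbool P = true <-> P.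
Proof. by rewrite /pbool; case: excluded_middle_informative. Qed.

Lemma chi_s_spec k (H : hypergraph k) :
  s_colorable H (chi_s H) /\ forall c, s_colorable H c -> chi_s H <= c.
Proof. by rewrite /chi_s; case: ex_minnP. Qed.

Lemma chi_s_dk_ge d k n (H : hypergraph k) : #|hv H| = n -> embeddable d H ->
  chi_s H <= chi_s_dk d k n.
Proof.
move=> hn he; rewrite /chi_s_dk.
have hlt : chi_s H < n.+1.
  by rewrite ltnS -hn; apply: (proj2 (chi_s_spec H)); apply: s_colorable_card.
apply: (@leq_bigmax_cond _ _ (fun m : 'I_n.+1 => nat_of_ord m) (Ordinal hlt)).
by apply/pboolP; exists H.
Qed.

Lemma strong_coloring_inj k (H : hypergraph k) c (kappa : hv H -> 'I_c) e :
  strong_coloring kappa -> e \in hE H -> {in e &, injective kappa}.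
Proof.
by move=> /forall_inP col he; apply/imset_injP; rewrite (eqP (col e he)) (huni he).
Qed.

Lemma chi_s_ge_clique k (H : hypergraph k) (C : {set hv H}) :
  (forall u v, u \in C -> v \in C -> u != v -> exists2 e, e \in hE H & (u \in e) && (v \in e)) ->
  #|C| <= chi_s H.
Proof.
move=> clique; have /existsP[kappa col] := proj1 (chi_s_spec H).
rewrite -[chi_s H]card_ord; apply: (@leq_card_in _ _ kappa) => u v uC vC kuv.
case: (eqVneq u v) => // nuv; have [e he /andP[ue ve]] := clique u v uC vC nuv.
exact: (strong_coloring_inj col he).
Qed.

Lemma subset_through_pair (T : finType) (e : {set T}) x y k : x \in e -> y \in e -> x != y ->
  2 <= k -> k <= #|e| -> exists e' : {set T}, [/\ x \in e', y \in e', e' \subset e & #|e'| = k].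
Proof.
move=> hx hy hxy hk hke.
pose R := e :\: [set x; y].
have cR : #|R| = #|e| - 2.
  have sxy : [set x; y] \subset e by apply/subsetP => z; rewrite !inE => /orP[]/eqP->.
  by rewrite cardsD (setIidPr sxy) cards2 hxy.
pose A := [set z in take (k - 2) (enum R)].
have cA : #|A| = k - 2.
  rewrite cardsE (card_uniqP _) ?take_uniq ?enum_uniq // size_takel //.
  by rewrite -cardE cR; apply: leq_sub2r.
have sA : A \subset R by apply/subsetP => z; rewrite inE => /mem_take; rewrite mem_enum.
have yNA : y \notin A by apply/negP => /(subsetP sA); rewrite !inE eqxx orbT.
have xNyA : x \notin y |: A.
  by rewrite in_setU1 negb_or hxy /=; apply/negP => /(subsetP sA); rewrite !inE eqxx.
exists (x |: (y |: A)); split.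
- by rewrite in_setU1 eqxx.
- by rewrite !in_setU1 eqxx orbT.
- apply/subsetP => z; rewrite !in_setU1 => /orP[/eqP->//|/orP[/eqP->//|]].
  by move=> /(subsetP sA); rewrite inE => /andP[].
- by rewrite cardsU1 cardsU1 cA yNA xNyA /= add1n add1n -addn2 subnK.
Qed.

Section Skeleton.
Variables (K k : nat) (H : hypergraph K).

Definition skeleton_edges : {set {set hv H}} :=
  [set e' : {set hv H} | [exists e in hE H, e' \subset e] && (#|e'| == k)].

Lemma skeleton_uniform e : e \in skeleton_edges -> #|e| = k.
Proof. by rewrite inE => /andP[_ /eqP]. Qed.

Definition skeleton : hypergraph k := @Hypergraph k (hv H) skeleton_edges skeleton_uniform.

Lemma skeleton_edgeP e' : e' \in hE skeleton -> exists2 e, e \in hE H & e' \subset e.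
Proof. by rewrite inE => /andP[/exists_inP[e h1 h2] _]; exists e. Qed.

Variables (d : nat) (phi : hv H -> 'I_d -> R).

Lemma skeleton_embedding : 0 < K -> 0 < k -> @is_embedding d K H phi ->
  @is_embedding d k skeleton phi.
Proof.
move=> hK hk [dim inter].
have ind e : e \in hE H -> aff_indep phi e.
  by move=> he; apply: (aff_dim_full_indep (huni he) hK (dim e he)).
have k1 : k.-1.+1 = k by rewrite prednK.
split=> [e' he' | e1' e2' he1' he2' x].
  have [e he sub] := skeleton_edgeP he'; have ce' := skeleton_uniform he'.
  split; last by move=> T sT _; apply: leq_trans (subset_leq_card sT) _; rewrite ce' subn1 k1.
  by exists e'; rewrite subn1 k1; split=> //; split=> //; apply: aff_indep_subset sub (ind e he).
have [e1 he1 sub1] := skeleton_edgeP he1'; have [e2 he2 sub2] := skeleton_edgeP he2'.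
split=> [[c1 c2] | /in_conv_setI //].
exact: (face_conv_setI (ind e1 he1) (ind e2 he2) sub1 sub2 (proj1 (inter e1 e2 he1 he2 x))).
Qed.

(* A strong coloring of the k-skeleton (2 <= k) is a strong coloring of H:
   two vertices of an edge of H lie in a common edge of the skeleton. *)
Lemma skeleton_coloring c : 2 <= k -> k <= K ->
  s_colorable skeleton c -> s_colorable H c.
Proof.
move=> hk hkK /existsP[kappa col]; apply/existsP; exists kappa.
apply/forall_inP => e he; apply/eqP; transitivity #|e|; last exact: huni he.
apply: card_in_imset => x y hx hy hxy; case: (eqVneq x y) => // nxy.
have [e' [x' y' s' c']] := subset_through_pair hx hy nxy hk ltac:(by rewrite (huni he)).
have he' : e' \in hE skeleton by rewrite inE c' eqxx andbT; apply/exists_inP; exists e.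
exact: (strong_coloring_inj col he').
Qed.

End Skeleton.

Lemma chi_s_dk_skeleton d k n : 2 <= k -> k <= d.+1 ->
  chi_s_dk d d.+1 n <= chi_s_dk d k n.
Proof.
move=> hk hkd; apply/bigmax_leqP => m /pboolP [H [hn [[phi emb] <-]]].
have /(skeleton_coloring hk hkd) col := proj1 (chi_s_spec (skeleton k H)).
apply: leq_trans (proj2 (chi_s_spec H) _ col) _.
apply: chi_s_dk_ge => //; exists phi; apply: skeleton_embedding => //.
exact: leq_trans hk.
Qed.

Section SeparatingCubics.
Local Open Scope R_scope.

(* Offsets placing the two auxiliary points of the pair x < y just right of x
   and just right of y; both are at most 1/8 and compare as shown below. *)
Definition gapL (x y : R) : R := / (8 * (y - x)).
Definition gapR (x y : R) : R := / (8 * (y - x) + 4).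

Definition cubic (p0 p1 p2 p3 t : R) : R := p0 + p1 * t + p2 * (t * t) + p3 * (t * t * t).

(* f separates the edge {a < b} (parameters a, b, a + gapL a b, b + gapR a b)
   from the edge {c < e}: f < 0 on the former and f > 0 on the latter, except
   that f may vanish at a clique parameter shared by both edges. *)
Definition separates (a b c e : nat) (f : R -> R) : Prop :=
  let A := INR a in let B := INR b in let C := INR c in let E := INR e in
  (f A < 0 \/ (f A = 0 /\ (a = c \/ a = e))) /\ (f B < 0 \/ (f B = 0 /\ (b = c \/ b = e))) /\
  f (A + gapL A B) < 0 /\ f (B + gapR A B) < 0 /\
  (0 < f C \/ (f C = 0 /\ (c = a \/ c = b))) /\ (0 < f E \/ (f E = 0 /\ (e = a \/ e = b))) /\
  0 < f (C + gapL C E) /\ 0 < f (E + gapR C E).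

Definition cubic_separable a b c e := exists p0 p1 p2 p3, separates a b c e (cubic p0 p1 p2 p3).

Lemma separates_ext a b c e f g :
  (forall t, f t = g t) -> separates a b c e g -> separates a b c e f.
Proof. by move=> H; rewrite /separates !H. Qed.

Lemma INR_ltn (a b : nat) : (a < b)%N -> INR a + 1 <= INR b.
Proof. by move=> /ltP h; rewrite -S_INR; apply: le_INR. Qed.

Lemma gapL_bounds x y : x + 1 <= y -> 0 < gapL x y /\ gapL x y <= / 8.
Proof. by move=> h; split; [apply: Rinv_0_lt_compat | apply: Rinv_le_contravar]; lra. Qed.

Lemma gapR_bounds x y : x + 1 <= y -> 0 < gapR x y /\ gapR x y <= / 8.
Proof. by move=> h; split; [apply: Rinv_0_lt_compat | apply: Rinv_le_contravar]; lra. Qed.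

Lemma gapR_lt_gapL x y : x + 1 <= y -> gapR x y < gapL x y.
Proof. by move=> h; apply: Rinv_lt_contravar; nra. Qed.

Lemma gapL_lt_gapR x y z : x + 1 <= y -> y + 1 <= z -> gapL x z < gapR x y.
Proof. by move=> h h'; apply: Rinv_lt_contravar; nra. Qed.

Lemma gapR_lt_gapR x y z : x + 1 <= y -> y + 1 <= z -> gapR x z < gapR y z.
Proof. by move=> h h'; apply: Rinv_lt_contravar; nra. Qed.

(* At integer points the two kinds of offsets never coincide (parity). *)
Lemma gapR_neq_gapL (a b e : nat) : (a < b)%N -> (b < e)%N ->
  gapR (INR a) (INR b) <> gapL (INR b) (INR e).
Proof.
move=> hab hbe; have h1 := INR_ltn hab; have h2 := INR_ltn hbe; rewrite /gapR /gapL => H.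
have H2 : 8 * (INR b - INR a) + 4 = 8 * (INR e - INR b).
  by rewrite -(Rinv_inv (8 * (INR b - INR a) + 4)) H Rinv_inv.
have H3 : INR (Nat.add (Nat.mul 16 b) 4) = INR (Nat.add (Nat.mul 8 a) (Nat.mul 8 e)).
  by rewrite !plus_INR /=; lra.
by have := INR_eq _ _ H3; lia.
Qed.

Lemma mul_pos_pos x y : 0 < x -> 0 < y -> 0 < x * y. Proof. by move=> *; nra. Qed.
Lemma mul_neg_neg x y : x < 0 -> y < 0 -> 0 < x * y. Proof. by move=> *; nra. Qed.
Lemma mul_pos_neg x y : 0 < x -> y < 0 -> x * y < 0. Proof. by move=> *; nra. Qed.
Lemma mul_neg_pos x y : x < 0 -> 0 < y -> x * y < 0. Proof. by move=> *; nra. Qed.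

Ltac sign := match goal with
 | |- (0 < ?x * ?y)%R => first [apply: mul_pos_pos; [sign|sign] | apply: mul_neg_neg; [sign|sign]]
 | |- (?x * ?y < 0)%R => first [apply: mul_neg_pos; [sign|sign] | apply: mul_pos_neg; [sign|sign]]
 | |- _ => lra
end.

Ltac check_signs := rewrite /separates /=; intros; repeat split;
  try (left; sign; fail); try (right; split; [ring | auto; fail]); try sign.

Lemma cubic_roots3 r1 r2 r3 : exists p0 p1 p2 p3, forall t,
  cubic p0 p1 p2 p3 t = (t - r1) * (t - r2) * (t - r3).
Proof.
exists (- (r1 * r2 * r3)), (r1 * r2 + r1 * r3 + r2 * r3), (- (r1 + r2 + r3)), 1.
by move=> t; rewrite /cubic; ring.
Qed.

Lemma cubic_roots2 r1 r2 : exists p0 p1 p2 p3, forall t, cubic p0 p1 p2 p3 t = (t - r1) * (r2 - t).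
Proof. by exists (- (r1 * r2)), (r1 + r2), (-1), 0 => t; rewrite /cubic; ring. Qed.

Lemma cubic_root1 r : exists p0 p1 p2 p3, forall t, cubic p0 p1 p2 p3 t = t - r.
Proof. by exists (- r), 1, 0, 0 => t; rewrite /cubic; ring. Qed.

Ltac gap_facts a b :=
  let h := fresh "h" in
  have h := INR_ltn (a:=a) (b:=b) ltac:(done);
  have := gapL_bounds h; have := gapR_bounds h; have := gapR_lt_gapL h.

(* The six relative positions of two distinct pairs a < b and c < e with
   a <= c; each is separated by a cubic with roots chosen between the points. *)

Lemma cubic_sep_disjoint a b c e : (a < b)%N -> (b < c)%N -> (c < e)%N -> cubic_separable a b c e.
Proof.
move=> hab hbc hce; have [p0 [p1 [p2 [p3 hp]]]] := cubic_root1 (INR c - /2).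
exists p0, p1, p2, p3; apply: (separates_ext hp).
by have := INR_ltn hbc; gap_facts a b; gap_facts c e; check_signs.
Qed.

Lemma cubic_sep_crossing a b c e : (a < c)%N -> (c < b)%N -> (b < e)%N -> cubic_separable a b c e.
Proof.
move=> hac hcb hbe.
have [p0 [p1 [p2 [p3 hp]]]] := cubic_roots3 (INR c - /2) (INR b - /2) (INR e - /2).
exists p0, p1, p2, p3; apply: (separates_ext hp).
have := INR_ltn hac; have := INR_ltn hcb; have := INR_ltn hbe.
have hab := ltn_trans hac hcb; have hce := ltn_trans hcb hbe.
by gap_facts a b; gap_facts c e; check_signs.
Qed.

Lemma cubic_sep_nested a b c e : (a < c)%N -> (c < e)%N -> (e < b)%N -> cubic_separable a b c e.
Proof.
move=> hac hce heb.
have [p0 [p1 [p2 [p3 hp]]]] := cubic_roots2 (INR c - /2) (INR b - /2).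
exists p0, p1, p2, p3; apply: (separates_ext hp).
have := INR_ltn hac; have := INR_ltn hce; have := INR_ltn heb.
have hab := ltn_trans hac (ltn_trans hce heb).
by gap_facts a b; gap_facts c e; check_signs.
Qed.

Lemma cubic_sep_same_left a b e : (a < b)%N -> (b < e)%N -> cubic_separable a b a e.
Proof.
move=> hab hbe.
have [p0 [p1 [p2 [p3 hp]]]] :=
  cubic_roots3 (INR a) (INR a + gapR (INR a) (INR b)) (INR e - /2).
exists p0, p1, p2, p3; apply: (separates_ext hp).
have := INR_ltn hab; have := INR_ltn hbe; have hae := ltn_trans hab hbe.
have := gapL_lt_gapR (INR_ltn hab) (INR_ltn hbe).
by gap_facts a b; gap_facts a e; check_signs.
Qed.

Lemma cubic_sep_chain a b e : (a < b)%N -> (b < e)%N -> cubic_separable a b b e.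
Proof.
move=> hab hbe; have := INR_ltn hab; have := INR_ltn hbe.
gap_facts a b; gap_facts b e.
have hne := gapR_neq_gapL hab hbe.
set r := INR b + (gapR (INR a) (INR b) + gapL (INR b) (INR e)) / 2.
have [hlt|hgt] : gapR (INR a) (INR b) < gapL (INR b) (INR e) \/
                 gapL (INR b) (INR e) < gapR (INR a) (INR b).
    by have := Rtotal_order (gapR (INR a) (INR b)) (gapL (INR b) (INR e)); tauto.
  have [p0 [p1 [p2 [p3 hp]]]] := cubic_roots3 (INR b) (INR b) r.
  by exists p0, p1, p2, p3; apply: (separates_ext hp); rewrite /r; check_signs.
have [p0 [p1 [p2 [p3 hp]]]] := cubic_roots3 (INR b) r (INR e - /2).
by exists p0, p1, p2, p3; apply: (separates_ext hp); rewrite /r; check_signs.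
Qed.

Lemma cubic_sep_same_right a c b : (a < c)%N -> (c < b)%N -> cubic_separable a b c b.
Proof.
move=> hac hcb; have hab := ltn_trans hac hcb.
have := INR_ltn hac; have := INR_ltn hcb.
gap_facts a b; gap_facts c b; have := gapR_lt_gapR (INR_ltn hac) (INR_ltn hcb).
set r := INR b + (gapR (INR a) (INR b) + gapR (INR c) (INR b)) / 2.
have [p0 [p1 [p2 [p3 hp]]]] := cubic_roots3 (INR c - /2) (INR b) r.
by exists p0, p1, p2, p3; apply: (separates_ext hp); rewrite /r; check_signs.
Qed.

(* Negating the cubic swaps the roles of the two edges. *)
Lemma cubic_separable_sym a b c e : cubic_separable c e a b -> cubic_separable a b c e.
Proof.
move=> [p0 [p1 [p2 [p3 h]]]]; exists (- p0), (- p1), (- p2), (- p3).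
apply: (separates_ext (g := fun t => - cubic p0 p1 p2 p3 t)) => [t|].
  by rewrite /cubic; ring.
by move: h; rewrite /separates /=; intuition lra.
Qed.

Lemma cubic_separable_lex a b c e : (a < b)%N -> (c < e)%N ->
  (a < c)%N \/ (a = c /\ (b < e)%N) -> cubic_separable a b c e.
Proof.
move=> hab hce [hac|[<- hbe]]; last exact: cubic_sep_same_left.
case: (ltngtP b c) => hbc; first exact: cubic_sep_disjoint.
  case: (ltngtP b e) => hbe; first exact: cubic_sep_crossing.
    exact: cubic_sep_nested.
  by rewrite hbe; apply: cubic_sep_same_right.
by rewrite -hbc; apply: cubic_sep_chain => //; rewrite hbc.
Qed.

Lemma cubic_separable_all a b c e : (a < b)%N -> (c < e)%N -> (a, b) <> (c, e) ->
  cubic_separable a b c e.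
Proof.
move=> hab hce hne; case: (ltngtP a c) => hac.
- by apply: cubic_separable_lex => //; left.
- by apply: cubic_separable_sym; apply: cubic_separable_lex => //; left.
- subst c; case: (ltngtP b e) => hbe.
  + by apply: cubic_separable_lex => //; right.
  + by apply: cubic_separable_sym; apply: cubic_separable_lex => //; right.
  + by subst e.
Qed.

End SeparatingCubics.

Section MomentCurve.
Variable d' : nat.
Local Notation d := d'.+3.
Local Open Scope R_scope.

Definition moment (t : R) (i : 'I_d) : R :=
  if val i == 0%N then t else if val i == 1%N then t * t else
  if val i == 2%N then t * t * t else 0.

(* The unit vector e_(j+3), orthogonal to the span of the moment curve; it is
   used both as an apex point and as the coefficient vector of a functional. *)
Definition apex (j : 'I_d') (i : 'I_d) : R := if val i == (j + 3)%N then 1 else 0.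

(* Coefficients of the functional x |-> p0 + p1 x0 + p2 x1 + p3 x2 - p0 (x3 + ...),
   which restricts to the cubic on the moment curve and vanishes at every apex. *)
Definition cubic_coef (p0 p1 p2 p3 : R) (i : 'I_d) : R :=
  if val i == 0%N then p1 else if val i == 1%N then p2 else
  if val i == 2%N then p3 else - p0.

Lemma sum_first3 (c x : 'I_d -> R) :
  \big[Rplus/R0]_(i < d) (c i * x i) =
  c (@Ordinal d 0 isT) * x (@Ordinal d 0 isT) + (c (@Ordinal d 1 isT) * x (@Ordinal d 1 isT) +
  (c (@Ordinal d 2 isT) * x (@Ordinal d 2 isT) +
   \big[Rplus/R0]_(j < d') (c (rshift 3 j) * x (rshift 3 j)))).
Proof.
rewrite big_ord_recl big_ord_recl big_ord_recl.
congr (c _ * x _ + (c _ * x _ + (c _ * x _ + _))); try by apply: val_inj.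
by apply: eq_bigr => j _; congr (c _ * x _); apply: val_inj.
Qed.

Lemma aff_cubic_moment p0 p1 p2 p3 t :
  aff_fun p0 (cubic_coef p0 p1 p2 p3) (moment t) = cubic p0 p1 p2 p3 t.
Proof.
rewrite /aff_fun sum_first3 /cubic_coef /moment /cubic /= big1; first ring.
by move=> j _; rewrite /= Rmult_0_r.
Qed.

Lemma aff_cubic_apex p0 p1 p2 p3 j : aff_fun p0 (cubic_coef p0 p1 p2 p3) (apex j) = 0.
Proof.
rewrite /aff_fun sum_first3 /cubic_coef /apex /= (bigD1 j) //= big1.
  by rewrite !addn3 add3n eqxx /=; ring.
move=> i /negbTE hij; have h : (val i == val j) = false by rewrite val_eqE.
by rewrite !addn3 add3n !eqSS h; ring.
Qed.

Lemma aff_apex_moment j t : aff_fun 0 (apex j) (moment t) = 0.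
Proof.
rewrite /aff_fun sum_first3 /apex /moment /= !addn3 /= big1; first ring.
by move=> i _; rewrite /= Rmult_0_r.
Qed.

Lemma aff_apex_apex j j' : aff_fun 0 (apex j) (apex j') = if j' == j then 1 else 0.
Proof.
rewrite /aff_fun sum_first3 /apex /= !addn3 /= (bigD1 j) //= big1.
  rewrite add3n eqxx !eqSS (_ : (val j == val j') = (j' == j)) ?val_eqE 1?eq_sym //.
  by case: (j' == j); ring.
move=> i /negbTE hij; have h : (val i == val j) = false by rewrite val_eqE.
by rewrite add3n !eqSS h; ring.
Qed.

End MomentCurve.

Section Construction.
Variables (m d' p : nat).
Local Notation d := d'.+3.

Definition opair := {q : 'I_m * 'I_m | q.1 != q.2}.

Definition vertex := ((('I_m + opair) + 'I_d') + 'I_p)%type.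

Definition vclique (i : 'I_m) : vertex := inl (inl (inl i)).
Definition vpair (q : opair) : vertex := inl (inl (inr q)).
Definition vapex (j : 'I_d') : vertex := inl (inr j).

Definition is_apex (v : vertex) : bool := if v is inl (inr _) then true else false.

Local Open Scope R_scope.

Definition pair_param (q : opair) : R :=
  let a := INR (val q).1 in let b := INR (val q).2 in
  if ((val q).1 < (val q).2)%N then a + gapL a b else a + gapR b a.

Definition param (v : vertex) : R :=
  match v with
  | inl (inl (inl i)) => INR i
  | inl (inl (inr q)) => pair_param q
  | _ => 0
  end.

Definition place (v : vertex) : 'I_d -> R :=
  match v with
  | inl (inl _) => moment (param v)
  | inl (inr j) => apex j
  | inr _ => fun _ => 0
  end.

Definition in_edge (a b : 'I_m) (v : vertex) : bool :=
  match v with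
  | inl (inl (inl i)) => (i == a) || (i == b)
  | inl (inl (inr q)) => (val q == (a, b)) || (val q == (b, a))
  | inl (inr _) => true
  | inr _ => false
  end.

Definition edge (a b : 'I_m) : {set vertex} := [set v | in_edge a b v].

Lemma edge_cases a b v : v \in edge a b ->
  v = vclique a \/ v = vclique b \/ (exists q : opair, v = vpair q /\ val q = (a, b)) \/
  (exists q : opair, v = vpair q /\ val q = (b, a)) \/ is_apex v.
Proof.
rewrite inE; case: v => [[[i|q]|j]|z] //=.
- by case/orP => /eqP ->; auto.
- by case/orP => /eqP h; [do 2 right; left | do 3 right; left]; exists q.
- by move=> _; do 4 right.
Qed.

Lemma pair_param_lt (q : opair) (a b : 'I_m) : val q = (a, b) -> (a < b)%N ->
  pair_param q = INR a + gapL (INR a) (INR b).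
Proof. by move=> h hab; rewrite /pair_param h /= hab. Qed.

Lemma pair_param_gt (q : opair) (a b : 'I_m) : val q = (b, a) -> (a < b)%N ->
  pair_param q = INR b + gapR (INR a) (INR b).
Proof. by move=> h hab; rewrite /pair_param h /= ltnNge (ltnW hab). Qed.

Lemma is_apexP v : is_apex v -> exists j, v = vapex j.
Proof. by case: v => [[[i|q]|j]|z] //= _; exists j. Qed.

(* A moment point with parameter s0 is singled out, among apices and moment
   points with parameters s1, s2, s3, by the cubic with these roots. *)
Lemma moment_single_out (e : {set vertex}) v0 s0 s1 s2 s3 :
  s0 <> s1 -> s0 <> s2 -> s0 <> s3 -> place v0 = moment s0 ->
  (forall v, v \in e -> v <> v0 -> is_apex v \/
     (place v = moment (param v) /\ (param v = s1 \/ param v = s2 \/ param v = s3))) ->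
  exists c0 c, aff_fun c0 c (place v0) <> 0 /\
    forall v, v \in e -> v != v0 -> aff_fun c0 c (place v) = 0.
Proof.
move=> h1 h2 h3 hv0 H.
have [p0 [p1 [p2 [p3 hp]]]] := cubic_roots3 s1 s2 s3.
exists p0, (cubic_coef p0 p1 p2 p3); split.
  rewrite hv0 aff_cubic_moment hp.
  by repeat apply: Rmult_integral_contrapositive_currified; lra.
move=> v hv /eqP hne; case: (H v hv hne) => [/is_apexP [j ->]|[-> hs]].
  exact: aff_cubic_apex.
by rewrite aff_cubic_moment hp; case: hs => [->|[->|->]]; ring.
Qed.

Lemma other_three (t0 t1 t2 t3 t4 : R) :
  t1 <> t2 -> t1 <> t3 -> t1 <> t4 -> t2 <> t3 -> t2 <> t4 -> t3 <> t4 ->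
  t0 = t1 \/ t0 = t2 \/ t0 = t3 \/ t0 = t4 ->
  exists s1 s2 s3, [/\ t0 <> s1, t0 <> s2, t0 <> s3 &
    forall t, t = t1 \/ t = t2 \/ t = t3 \/ t = t4 -> t <> t0 -> t = s1 \/ t = s2 \/ t = s3].
Proof.
move=> d12 d13 d14 d23 d24 d34 [->|[->|[->|->]]].
- by exists t2, t3, t4; split=> // t; intuition.
- by exists t1, t3, t4; split=> //; try (by auto); move=> t; intuition.
- by exists t1, t2, t4; split=> //; try (by auto); move=> t; intuition.
- by exists t1, t2, t3; split=> //; try (by auto); move=> t; intuition.
Qed.

Lemma moment_apex_indep (e : {set vertex}) t1 t2 t3 t4 :
  t1 <> t2 -> t1 <> t3 -> t1 <> t4 -> t2 <> t3 -> t2 <> t4 -> t3 <> t4 ->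
  (forall v, v \in e -> ~~ is_apex v -> place v = moment (param v) /\
      (param v = t1 \/ param v = t2 \/ param v = t3 \/ param v = t4)) ->
  (forall u v, u \in e -> v \in e -> ~~ is_apex u -> ~~ is_apex v -> param u = param v -> u = v) ->
  aff_indep place e.
Proof.
move=> d12 d13 d14 d23 d24 d34 H Hinj; apply: aff_indep_of_dual => v0 hv0.
case: (boolP (is_apex v0)) => [/is_apexP [j ->] | nA0].
  exists 0, (apex j); split; first by rewrite aff_apex_apex eqxx; lra.
  move=> v hv hne; case: (boolP (is_apex v)) => [/is_apexP [j' ej'] | nA].
    by subst v; rewrite aff_apex_apex; case: (eqVneq j' j) hne => // ->; rewrite eqxx.
  by rewrite (proj1 (H v hv nA)) aff_apex_moment.
have [pl0 ht0] := H v0 hv0 nA0.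
have [s1 [s2 [s3 [n1 n2 n3 cover]]]] := other_three d12 d13 d14 d23 d24 d34 ht0.
apply: (moment_single_out n1 n2 n3 pl0) => v hv hne.
case: (boolP (is_apex v)) => [|nA]; [by left | right].
have [pl ht] := H v hv nA; split=> //; apply: (cover _ ht) => et.
by apply: hne; apply: Hinj.
Qed.

Lemma edge_params (a b : 'I_m) v : (a < b)%N -> v \in edge a b -> ~~ is_apex v ->
  place v = moment (param v) /\
  (param v = INR a \/ param v = INR b \/ param v = INR a + gapL (INR a) (INR b) \/
   param v = INR b + gapR (INR a) (INR b)).
Proof.
move=> hab hv; case: (edge_cases hv) => [->|[->|[[q [-> hq]]|[[q [-> hq]]|-> //]]]] _.
- by split => //; left.
- by split => //; right; left.
- by split => //; rewrite /= (pair_param_lt hq hab); do 2 right; left.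
- by split => //; rewrite /= (pair_param_gt hq hab); do 3 right.
Qed.

Lemma edge_param_inj (a b : 'I_m) u v : (a < b)%N -> u \in edge a b -> v \in edge a b ->
  ~~ is_apex u -> ~~ is_apex v -> param u = param v -> u = v.
Proof.
move=> hab hu hv nu nv et.
have h := INR_ltn hab; have := gapL_bounds h; have := gapR_bounds h.
case: (edge_cases hu) => [eu|[eu|[[q [eu hq]]|[[q [eu hq]]|hA]]]];
 try (by rewrite hA in nu); subst u;
case: (edge_cases hv) => [ev|[ev|[[q' [ev hq']]|[[q' [ev hq']]|hA']]]];
 try (by rewrite hA' in nv); subst v => //=; move: et => /=;
 rewrite ?(pair_param_lt hq hab) ?(pair_param_gt hq hab)
         ?(pair_param_lt hq' hab) ?(pair_param_gt hq' hab); intros; try lra;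
 congr vpair; apply: val_inj; by rewrite hq hq'.
Qed.

Lemma edge_indep (a b : 'I_m) : (a < b)%N -> aff_indep place (edge a b).
Proof.
move=> hab; have h := INR_ltn hab; have := gapL_bounds h; have := gapR_bounds h => h1 h2.
apply: (@moment_apex_indep _ (INR a) (INR b) (INR a + gapL (INR a) (INR b))
          (INR b + gapR (INR a) (INR b))); try lra.
- by move=> v hv; apply: (edge_params hab hv).
- by move=> u v hu hv; apply: (edge_param_inj hab hu hv).
Qed.

Definition apices : {set vertex} := [set vapex j | j in 'I_d'].

Lemma in_apices v : (v \in apices) = is_apex v.
Proof.
by case: v => [[[i|q]|j]|z] /=; apply/imsetP; try (by case); exists j.
Qed.

Lemma vclique_eq i j : (vclique i == vclique j) = (i == j).
Proof. by apply/eqP/eqP => [[]|->]. Qed.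

Lemma vpair_eq q q' : (vpair q == vpair q') = (val q == val q').
Proof. by rewrite val_eqE; apply/eqP/eqP => [[]|->]. Qed.

Lemma card_edge (a b : 'I_m) : (a < b)%N -> #|edge a b| = d'.+4.
Proof.
move=> hab; have nab : a != b by rewrite -val_eqE /= neq_ltn hab.
pose qab : opair := exist _ (a, b) nab.
have nba : b != a by rewrite eq_sym.
pose qba : opair := exist _ (b, a) nba.
have -> : edge a b = vclique a |: (vclique b |: (vpair qab |: (vpair qba |: apices))).
  apply/setP => v; rewrite !in_setU1 in_apices inE.
  by case: v => [[[i|q]|j]|z] //=; rewrite ?vclique_eq ?vpair_eq orbF.
rewrite !cardsU1 !in_setU1 !in_apices /= card_imset => [|x y []] //.
by rewrite card_ord vclique_eq (negbTE nab) vpair_eq /= -pair_eqE /= (negbTE nab).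
Qed.

Lemma edge_side (a b c e : 'I_m) p0 p1 p2 p3 (sg : R) : (a < b)%N ->
  (sg * cubic p0 p1 p2 p3 (INR a) < 0 \/
     (cubic p0 p1 p2 p3 (INR a) = 0 /\ (val a = val c \/ val a = val e))) ->
  (sg * cubic p0 p1 p2 p3 (INR b) < 0 \/
     (cubic p0 p1 p2 p3 (INR b) = 0 /\ (val b = val c \/ val b = val e))) ->
  sg * cubic p0 p1 p2 p3 (INR a + gapL (INR a) (INR b)) < 0 ->
  sg * cubic p0 p1 p2 p3 (INR b + gapR (INR a) (INR b)) < 0 ->
  forall v, v \in edge a b -> sg * aff_fun p0 (cubic_coef p0 p1 p2 p3) (place v) <= 0 /\
     (aff_fun p0 (cubic_coef p0 p1 p2 p3) (place v) = 0 -> v \in edge c e).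
Proof.
move=> hab hA hB hX1 hX2 v hv.
case: (boolP (is_apex v)) => [/is_apexP [j ->] | nA].
  by rewrite aff_cubic_apex inE; split; [lra | ].
have [-> hpar] := edge_params hab hv nA; rewrite aff_cubic_moment.
have strict : forall t, sg * cubic p0 p1 p2 p3 t < 0 ->
    sg * cubic p0 p1 p2 p3 t <= 0 /\ (cubic p0 p1 p2 p3 t = 0 -> v \in edge c e).
  by move=> t h; split; [lra | move=> h0; rewrite h0 in h; lra].
case: (edge_cases hv) => [ev|[ev|[[q [ev hq]]|[[q [ev hq]]|hA']]]];
  last (by rewrite hA' in nA); subst v; rewrite /= ?(pair_param_lt hq hab) ?(pair_param_gt hq hab);
  try exact: strict.
- case: hA => [/strict // | [-> hc]]; split=> [|_]; first lra.
  by rewrite inE /=; case: hc => /val_inj ->; rewrite eqxx ?orbT.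
- case: hB => [/strict // | [-> hc]]; split=> [|_]; first lra.
  by rewrite inE /=; case: hc => /val_inj ->; rewrite eqxx ?orbT.
Qed.

Lemma edge_conv_setI (a b c e : 'I_m) : (a < b)%N -> (c < e)%N -> forall x,
  (in_conv place (edge a b) x /\ in_conv place (edge c e) x) <->
  in_conv place (edge a b :&: edge c e) x.
Proof.
move=> hab hce x.
case: (boolP ((val a == val c) && (val b == val e))) =>
  [/andP[/eqP/val_inj -> /eqP/val_inj ->] | hne].
  by rewrite setIid; tauto.
have hne' : (val a, val b) <> (val c, val e).
  by case=> h1 h2; apply: (negP hne); apply/andP; split; apply/eqP.
have [p0 [p1 [p2 [p3 sep]]]] := cubic_separable_all hab hce hne'.
move: sep; rewrite /separates /= => [[s1 [s2 [s3 [s4 [s5 [s6 [s7 s8]]]]]]]].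
apply: (separated_conv_setI (c0 := p0) (c := cubic_coef p0 p1 p2 p3)) => v hv.
- have [h h'] := @edge_side a b c e p0 p1 p2 p3 1 hab
    ltac:(by case: s1 => [h|[h1 h2]]; [left; lra | right])
    ltac:(by case: s2 => [h|[h1 h2]]; [left; lra | right]) ltac:(lra) ltac:(lra) v hv.
  by split => //; lra.
- have [h h'] := @edge_side c e a b p0 p1 p2 p3 (-1) hce
    ltac:(by case: s5 => [h|[h1 h2]]; [left; lra | right])
    ltac:(by case: s6 => [h|[h1 h2]]; [left; lra | right]) ltac:(lra) ltac:(lra) v hv.
  by split => //; lra.
Qed.

Definition edges : {set {set vertex}} :=
  [set edge ab.1 ab.2 | ab in [pred ab : 'I_m * 'I_m | (ab.1 < ab.2)%N]].

Lemma edges_uniform e : e \in edges -> #|e| = d'.+4.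
Proof. by move=> /imsetP [[a b] hab ->]; apply: card_edge. Qed.

Definition clique_hypergraph : hypergraph d'.+4 := @Hypergraph d'.+4 vertex edges edges_uniform.

Lemma clique_hypergraph_embedding : @is_embedding d d'.+4 clique_hypergraph place.
Proof.
split=> [e /imsetP [[a b] hab ->] /= | e1 e2 /imsetP [[a b] hab ->] /imsetP [[c e] hce ->] /=].
  split; last by move=> T sT _; rewrite -(card_edge hab); apply: subset_leq_card.
  by exists (edge a b); split => //; split; [exact: edge_indep | exact: card_edge].
exact: edge_conv_setI.
Qed.

Definition clique : {set vertex} := [set vclique i | i in 'I_m] :|: apices.

Lemma card_clique : #|clique| = (m + d')%N.
Proof.
rewrite /clique cardsU.
have -> : [set vclique i | i in 'I_m] :&: apices = set0.
  by apply/setP => v; rewrite !inE in_apices; apply/negP => /andP[/imsetP [i _ ->]].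
by rewrite cards0 subn0 !card_imset ?card_ord // => x y [].
Qed.

Lemma pair_edge (i j : 'I_m) : i != j ->
  exists2 e, e \in edges & (vclique i \in e) && (vclique j \in e).
Proof.
move=> hij; case: (ltngtP i j) => h.
- by exists (edge i j); [apply/imsetP; exists (i, j) | rewrite !inE /= !eqxx ?orbT].
- by exists (edge j i); [apply/imsetP; exists (j, i) | rewrite !inE /= !eqxx ?orbT].
- by move: hij => /eqP []; apply: val_inj.
Qed.

Lemma apex_in_edges j e : e \in edges -> vapex j \in e.
Proof. by move=> /imsetP [ab _ ->]; rewrite inE. Qed.

Lemma clique_common_edge (hm : (1 < m)%N) u v : u \in clique -> v \in clique -> u != v ->
  exists2 e, e \in edges & (u \in e) && (v \in e).
Proof.
have h0 : (0 < m)%N by apply: ltn_trans hm.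
have partner (i : 'I_m) : exists j : 'I_m, i != j.
  case: (eqVneq (val i) 0%N) => h; [exists (Ordinal hm) | exists (Ordinal h0)];
  by rewrite -val_eqE ?h.
rewrite !inE !in_apices => /orP[/imsetP [i _ ->]|hu] /orP[/imsetP [i' _ ->]|hv] huv.
- by apply: pair_edge; rewrite vclique_eq in huv.
- have [j /pair_edge [e he /andP[ie _]]] := partner i; have [j' ->] := is_apexP hv.
  by exists e => //; rewrite ie apex_in_edges.
- have [j /pair_edge [e he /andP[ie _]]] := partner i'; have [j' ->] := is_apexP hu.
  by exists e => //; rewrite ie apex_in_edges.
- have [j ->] := is_apexP hu; have [j' ->] := is_apexP hv.
  exists (edge (Ordinal h0) (Ordinal hm)); first by apply/imsetP; exists (Ordinal h0, Ordinal hm).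
  by rewrite !inE.
Qed.

Lemma chi_s_clique_hypergraph : (1 < m)%N -> (m + d' <= chi_s clique_hypergraph)%N.
Proof.
by move=> hm; rewrite -card_clique; apply: chi_s_ge_clique; apply: clique_common_edge.
Qed.

Lemma card_opair : #|{: opair}| = (m * m - m)%N.
Proof.
rewrite card_sig.
have diag : #|[pred q : 'I_m * 'I_m | q.1 == q.2]| = m.
  rewrite -[RHS](card_ord m) -(card_imset (mem 'I_m) (f := fun i : 'I_m => (i, i))); last first.
    by move=> x y [].
  apply: eq_card => [[x y]]; rewrite inE /=; apply/eqP/imsetP => [->|[i _ [-> ->]]] //.
  by exists y.
have := cardC [pred q : 'I_m * 'I_m | q.1 == q.2]; rewrite diag card_prod card_ord => <-.
by rewrite addKn; apply: eq_card => q; rewrite !inE.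
Qed.

Lemma card_vertex : #|{: vertex}| = (m * m - m + m + d' + p)%N.
Proof. by rewrite /vertex !card_sum card_opair !card_ord (addnC m (m * m - m)%N). Qed.

End Construction.

Lemma sqrt_parameters n d' : d'.+4 <= n ->
  let m := Nat.sqrt (n - d'.+3 + 3) in 1 < m /\ m * m - m + m + d' <= n.
Proof.
move=> hn m.
have m2 : 1 < m.
  have := Nat.sqrt_le_mono 4 (n - d'.+3 + 3) ltac:(lia).
  by rewrite (_ : Nat.sqrt 4 = 2) //; lia.
have := Nat.sqrt_spec (n - d'.+3 + 3); rewrite -/m => hmm.
split=> //; have : m <= m * m by nia.
lia.
Qed.

Theorem mainTheorem10 (d k n : nat) :
  3 <= d -> d.+1 <= n -> 2 <= k -> k <= d.+1 ->
  chi_s_dk d d.+1 n <= chi_s_dk d k n /\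
  Nat.sqrt (n - d + 3) + d - 3 <= chi_s_dk d d.+1 n.
Proof.
move=> hd hn hk hkd; split; first exact: chi_s_dk_skeleton.
case: d hd hn hkd => [|[|[|d']]] // _ hn _.
have [m2 size_ok] := sqrt_parameters hn.
set m := Nat.sqrt _ in m2 size_ok *.
pose p := n - (m * m - m + m + d').
have card_n : #|hv (clique_hypergraph m d' p)| = n by rewrite card_vertex /p; lia.
have -> : m + d'.+3 - 3 = m + d' by lia.
apply: leq_trans (chi_s_clique_hypergraph d' p m2) _.
apply: chi_s_dk_ge card_n _.
by exists (@place m d' p); apply: clique_hypergraph_embedding.
Qed.
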